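(* Let $X$ and $\varepsilon$ be independent real random variables and $Y=X+\varepsilon$. Suppose $P(X\in\{\xi_\ell\}_{\ell\in\mathbb{N}_0})=1$ for real numbers $\xi_0<\xi_1<\xi_2<\cdots$, and $F_X\{\xi_0\}>0$. Suppose $\varepsilon$ is purely discrete with (countable) set of atoms $\mathbb{T}_\varepsilon$, and there exists $z_0\in\mathbb{T}_\varepsilon$ with $F_\varepsilon(z_0-)=0$. Define $p_X(\ell):=F_X\{\xi_\ell\}\mathbf 1_{\mathbb{N}_0}(\ell)$, $$\ddot p_{\varepsilon,+}(\ell,z):=\Big(\delta_{z,0}-\frac{F_\varepsilon\{z_0+\xi_\ell-\xi_{\ell-z}\}}{F_\varepsilon\{z_0\}}\mathbf 1_{\{0,\dots,\ell\}}(z)\Big)\mathbf 1_{\mathbb{N}_0}(\ell),\qquad \ddot p_Y(\ell):=\frac{F_Y\{z_0+\xi_\ell\}}{F_\varepsilon\{z_0\}}\mathbf 1_{\mathbb{N}_0}(\ell)$$ for $\ell,z\in\mathbb{Z}$. Then $$p_X(\ell)=\sum_{z\in\mathbb{Z}}\ddot p_Y(\ell-z)\,\beta\{\ddot p_{\varepsilon,+}\}(\ell,z)\qquad(\ell\in\mathbb{Z}).$$ Moreover, if there exists $s>0$ with $\xi_\ell=\xi_0+s\ell$ for all $\ell\in\mathbb{N}_0$, then with $\ddot u_{\varepsilon,+}(z):=\ddot p_{\varepsilon,+}(z,z)$, $$F_X(\xi)=(\Theta\{\ddot p_Y\}*\Theta\{\gamma\{\ddot u_{\varepsilon,+}\}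\})\Big(\frac{\xi-\xi_0}{s}\Big)\qquad(\xi\in\mathbb{R}).$$
   Context: $F_B$ denotes the distribution function of a random variable $B$, $F_B\{x\}:=P(B=x)$, $F_B(x-):=P(B<x)$. $\delta_{z,0}=1$ if $z=0$, else $0$. For a double sequence $\ddot p(\ell,z)$ vanishing for $z<0$: $\ddot p^{*0}(\ell,z):=\delta_{z,0}$, $\ddot p^{*j}(\ell,z):=\sum_{z_1\in\mathbb{Z}}\ddot p(\ell,z_1)\ddot p^{*(j-1)}(\ell-z_1,z-z_1)$ for $j\ge1$, and $\beta\{\ddot p\}(\ell,z):=\sum_{j=0}^{z}\ddot p^{*j}(\ell,z)$ (empty sum $=0$). For a single sequence $\ddot u$ vanishing on negative integers: $\ddot u^{*0}(z):=\delta_{z,0}$, $\ddot u^{*j}(z):=\sum_y\ddot u(z-y)\ddot u^{*(j-1)}(y)$, $\gamma\{\ddot u\}(z):=\sum_{j=0}^z\ddot u^{*j}(z)$. For a sequence $p$ vanishing on negative integers, $\Theta\{p\}(\xi):=\sum_{z=-\infty}^{\lfloor\xi\rfloor}p(z)$, and for two such sequences $(\Theta\{p\}*\Theta\{q\})(x):=\sum_{z\in\mathbb{Z}}\Theta\{p\}(x-z)q(z)$ (the Stieltjes convolution, a finite sum). *)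

From HB Require Import structures.
From mathcomp Require Import all_boot all_order all_algebra.
From mathcomp Require Import all_classical all_reals all_analysis.
Set Implicit Arguments. Unset Strict Implicit. Unset Printing Implicit Defensive.
Import Order.TTheory GRing.Theory Num.Theory.
Local Open Scope classical_set_scope.
Local Open Scope ring_scope.

Section Defs.
Context (d : measure_display) (T : measurableType d) (R : realType)
        (P : probability T R).

Definition atom_mass (B : T -> R) (x : R) : R := fine (P (B @^-1` [set x])).
Definition cdf_left (B : T -> R) (x : R) : R := fine (P (B @^-1` `]-oo, x[)).
Definition distr_fn (B : T -> R) (x : R) : R := fine (P (B @^-1` `]-oo, x])).

Definition indep_RV (X Y : T -> R) : Prop :=
  forall A B : set R, measurable A -> measurable B ->
    P (X @^-1` A `&` Y @^-1` B) = (P (X @^-1` A) * P (Y @^-1` B))%E.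

Definition purely_discrete (B : T -> R) : Prop :=
  exists S : set R, countable S /\ P (B @^-1` S) = 1%E.
End Defs.

Section Conv.
Context (R : realType).

(* Sums over z1 in Z below are restricted to the range where the summand can be
   nonzero, for sequences vanishing at negative second argument. *)
Fixpoint dconv_pow (p : int -> int -> R) (j : nat) (l z : int) : R :=
  match j with
  | 0 => if z == 0 then 1 else 0
  | j'.+1 => \sum_(k < (absz z).+1 | (k%:Z <= z)%R)
               p l k%:Z * dconv_pow p j' (l - k%:Z) (z - k%:Z)
  end.

Definition dbeta (p : int -> int -> R) (l z : int) : R :=
  if (0 <= z)%R then \sum_(j < (absz z).+1) dconv_pow p j l z else 0.

Fixpoint sconv_pow (u : int -> R) (j : nat) (z : int) : R :=
  match j with
  | 0 => if z == 0 then 1 else 0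
  | j'.+1 => \sum_(k < (absz z).+1 | (k%:Z <= z)%R)
               u (z - k%:Z) * sconv_pow u j' k%:Z
  end.

Definition sgamma (u : int -> R) (z : int) : R :=
  if (0 <= z)%R then \sum_(j < (absz z).+1) sconv_pow u j z else 0.

(* Theta{p}(xi) := sum_{z <= floor xi} p(z), p vanishing on negatives *)
Definition Theta (p : int -> R) (x : R) : R :=
  \sum_(k < (absz (Num.floor x)).+1 | (k%:Z <= Num.floor x)%R) p k%:Z.

Definition Theta_conv (p q : int -> R) (x : R) : R :=
  \sum_(k < (absz (Num.floor x)).+1 | (k%:Z <= Num.floor x)%R)
     Theta p (x - k%:R) * q k%:Z.
End Conv.

Section Paper.
Context (d : measure_display) (T : measurableType d) (R : realType)
        (P : probability T R).

Definition p_X (X : T -> R) (xi : nat -> R) (l : int) : R :=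
  if (0 <= l)%R then atom_mass P X (xi (absz l)) else 0.

Definition pdd_eps (eps : T -> R) (xi : nat -> R) (z0 : R) (l z : int) : R :=
  if (0 <= l)%R then
    (if z == 0 then 1 else 0) -
    (if ((0 <= z) && (z <= l))%R then
        atom_mass P eps (z0 + xi (absz l) - xi (absz (l - z)))
          / atom_mass P eps z0
     else 0)
  else 0.

Definition pdd_Y (Y eps : T -> R) (xi : nat -> R) (z0 : R) (l : int) : R :=
  if (0 <= l)%R then atom_mass P Y (z0 + xi (absz l)) / atom_mass P eps z0
  else 0.
End Paper.

From HB Require Import structures.
From mathcomp Require Import all_boot all_order all_algebra.
From mathcomp Require Import all_classical all_reals all_analysis.
From mathcomp Require Import zify ring lra.
Import Order.TTheory GRing.Theory Num.Theory.
Set Implicit Arguments. Unset Strict Implicit. Unset Printing Implicit Defensive.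
Local Open Scope classical_set_scope.
Local Open Scope ring_scope.

(** Since eps >= z0 almost surely and X lives on the increasing grid xi,
    independence gives F_Y{z0 + xi_n} = sum_(m <= n) F_X{xi_m} F_eps{z0 + xi_n - xi_m}.
    Dividing by F_eps{z0} turns this into the renewal equation
    p_X(n) = p_Y(n) + sum_k p_eps(n, k) p_X(n - k) with p_eps(n, 0) = 0, whose
    solution is p_Y convolved with the resolvent beta{p_eps} = sum_j p_eps^{*j},
    itself characterised by beta = delta + p_eps * beta.  On an arithmetic grid
    p_eps(l, z) depends on z only, so beta collapses to gamma{u_eps}, and summing
    p_X over the grid points below x yields the Theta formula. *)

Lemma big_ord_lez (V : nmodType) (n : nat) (F : 'I_n.+1 -> V) :
  \sum_(k < n.+1 | k%:Z <= n%:Z) F k = \sum_(k < n.+1) F k.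
Proof. by apply: eq_bigl => k /=; rewrite lez_nat -ltnS ltn_ord. Qed.

Lemma big_ord_lez_lt0 (V : nmodType) (m : nat) (z : int) (F : 'I_m -> V) :
  z < 0 -> \sum_(k < m | k%:Z <= z) F k = 0.
Proof.
move=> z_lt0; apply: big_pred0 => k /=.
by apply/negbTE; rewrite -ltNge (lt_le_trans z_lt0).
Qed.

Section Resolvent.
Variables (R : realType) (p : int -> int -> R).
Hypothesis p_l0 : forall l, p l 0 = 0.

Lemma dconv_pow_lt j l z : z < j%:Z -> dconv_pow p j l z = 0.
Proof.
elim: j l z => [|j IH] l z z_lt /=.
  by rewrite ifF //; apply/negbTE; rewrite lt_eqF.
apply: big1 => k _; case: (posnP k) => [->|k_gt0]; first by rewrite p_l0 mul0r.
rewrite IH ?mulr0 //; rewrite -ltz_nat in k_gt0; lia.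
Qed.

Lemma dbetaE M l z : z < M%:Z -> \sum_(j < M) dconv_pow p j l z = dbeta p l z.
Proof.
case: z => [n|n] z_lt; rewrite /dbeta /=; last first.
  by apply: big1 => j _; apply: dconv_pow_lt; apply: (lt_le_trans (y := 0)).
have n_lt : (n < M)%N by rewrite -ltz_nat.
rewrite [RHS](big_ord_widen M (fun j => dconv_pow p j l n)) //.
rewrite [RHS]big_mkcond; apply: eq_bigr => j _; case: ifP => // /negbT.
by rewrite -leqNgt => nj; rewrite dconv_pow_lt // ltz_nat.
Qed.

Lemma dbeta_rec l (n : nat) : dbeta p l n%:Z =
  (n == 0)%:R + \sum_(k < n.+1) p l k%:Z * dbeta p (l - k%:Z) (n%:Z - k%:Z).
Proof.
rewrite -(@dbetaE n.+2) ?ltz_nat // big_ord_recl /=.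
congr (_ + _); first by case: n.
under eq_bigr => j _ do rewrite big_ord_lez.
rewrite exchange_big /=; apply: eq_bigr => k _.
rewrite -mulr_sumr; congr (_ * _); apply: dbetaE.
have := ltn_ord k; rewrite -ltz_nat; lia.
Qed.

Lemma dbeta_rec_widen l (n N : nat) : (n < N)%N -> dbeta p l n%:Z =
  (n == 0)%:R + \sum_(k < N) p l k%:Z * dbeta p (l - k%:Z) (n%:Z - k%:Z).
Proof.
move=> n_lt; rewrite dbeta_rec; congr (_ + _).
rewrite (big_ord_widen N (fun k : nat => p l k%:Z * dbeta p (l - k%:Z) (n%:Z - k%:Z))) //.
rewrite big_mkcond; apply: eq_bigr => k _; case: ifP => // /negbT.
rewrite -leqNgt -ltz_nat => nk; rewrite /dbeta ifF ?mulr0 //.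
by apply/negbTE; rewrite -ltNge; lia.
Qed.

Lemma renewal_solution (q f : int -> R) :
  (forall n : nat, f n%:Z = q n%:Z + \sum_(k < n.+1) p n%:Z k%:Z * f (n%:Z - k%:Z)) ->
  forall n : nat, f n%:Z = \sum_(k < n.+1) q (n%:Z - k%:Z) * dbeta p n%:Z k%:Z.
Proof.
(* Expand each beta (n, k) by [dbeta_rec_widen]; the k1-th inner sum is then
   the induction hypothesis at n - k1, shifted by k1. *)
move=> f_rec; elim/ltn_ind => n IH.
rewrite (eq_bigr (fun k : 'I_n.+1 => q (n%:Z - k%:Z) * ((k == 0 :> nat)%:R +
   \sum_(k1 < n.+1) p n%:Z k1%:Z * dbeta p (n%:Z - k1%:Z) (k%:Z - k1%:Z)))); last first.
  by move=> k _; rewrite (@dbeta_rec_widen n%:Z k n.+1).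
under eq_bigr do rewrite mulrDr.
rewrite big_split /= big_ord_recl /= subr0 mulr1 big1 ?addr0; last first.
  by move=> i _; rewrite mulr0.
rewrite f_rec; congr (_ + _).
under eq_bigr do rewrite mulr_sumr.
rewrite exchange_big /=; apply: eq_bigr => k1 _.
case: (posnP k1) => [->|k1_gt0].
  by rewrite p_l0 !mul0r big1 // => i _; rewrite mul0r mulr0.
under eq_bigr do rewrite mulrCA.
rewrite -mulr_sumr; congr (_ * _).
have k1_le : (k1 <= n)%N by rewrite -ltnS ltn_ord.
rewrite subzn // IH; last by lia.
rewrite -(big_mkord xpredT (fun k : nat => q (n%:Z - k%:Z) * dbeta p (n - k1)%N%:Z (k%:Z - k1%:Z))).
rewrite -(big_mkord xpredT (fun k : nat => q ((n - k1)%N%:Z - k%:Z) * dbeta p (n - k1)%N%:Z k%:Z)).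
rewrite [RHS](big_cat_nat _ (n := k1)) //=; last by lia.
rewrite [X in _ = X + _]big1_seq ?add0r; last first.
  move=> i; rewrite mem_index_iota => /andP [_ i_lt].
  by rewrite /dbeta ifF ?mulr0 //; apply/negbTE; rewrite -ltNge subr_lt0 ltz_nat.
rewrite -[X in _ = \sum_(X <= _ < _) _]add0n [RHS]big_addn subSn //.
apply: eq_bigr => i _; congr (q _ * dbeta _ _ _); rewrite ?PoszD; lia.
Qed.

End Resolvent.

Section Stationary.
Variables (R : realType) (p : int -> int -> R) (u : int -> R).
Hypothesis p_stationary : forall l z, z <= l -> p l z = u z.

Lemma dconv_pow_sconv_pow j l z : z <= l -> dconv_pow p j l z = sconv_pow u j z.
Proof.
elim: j l z => [|j IH] l z //= z_le.
case: z z_le => [n|n] z_le; last by rewrite !big_ord_lez_lt0.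
rewrite /= !big_ord_lez.
transitivity (\sum_(k < n.+1) u k%:Z * sconv_pow u j (n%:Z - k%:Z)).
  apply: eq_bigr => k _; rewrite p_stationary ?IH ?lerD2r //.
  have := ltn_ord k; rewrite -ltz_nat; lia.
rewrite [RHS](reindex_inj rev_ord_inj) /=; apply: eq_bigr => k _.
have k_le : (k <= n)%N by rewrite -ltnS ltn_ord.
by rewrite subSS (subzn k_le); congr (u _ * _); rewrite -(subzn k_le); lia.
Qed.

Lemma dbeta_sgamma l z : z <= l -> dbeta p l z = sgamma u z.
Proof.
move=> z_le; rewrite /dbeta /sgamma; case: ifP => // _.
by apply: eq_bigr => j _; apply: dconv_pow_sconv_pow.
Qed.

End Stationary.

Lemma sum_prefix_sums_mul (R : comPzSemiRingType) (Q G : nat -> R) (n : nat) :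
  \sum_(k < n.+1) (\sum_(i < (n - k).+1) Q i) * G k =
  \sum_(l < n.+1) \sum_(k < l.+1) Q (l - k)%N * G k.
Proof.
elim: n => [|n IH]; first by rewrite !big_ord1.
rewrite big_ord_recr /= subnn big_ord1 [RHS]big_ord_recr /= -IH.
rewrite [X in _ = _ + X]big_ord_recr /= subnn addrA; congr (_ + _).
rewrite -big_split /=; apply: eq_bigr => k _.
by rewrite subSn ?big_ord_recr ?mulrDl //= -ltnS ltn_ord.
Qed.

Lemma floorBnat (R : realType) (y : R) (k : nat) :
  Num.floor (y - k%:R) = Num.floor y - k%:Z.
Proof. by rewrite -[k%:R]/((k%:Z)%:~R : R) -mulrNz floorDrz ?intrKfloor. Qed.

Lemma Theta_convE (R : realType) (q g : int -> R) (y : R) (n : nat) :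
  Num.floor y = n%:Z ->
  Theta_conv q g y = \sum_(l < n.+1) \sum_(k < l.+1) q (l%:Z - k%:Z) * g k%:Z.
Proof.
move=> floor_y; rewrite /Theta_conv floor_y /= big_ord_lez.
transitivity (\sum_(k < n.+1) (\sum_(i < (n - k).+1) q i%:Z) * g k%:Z).
  apply: eq_bigr => k _; have k_le : (k <= n)%N by rewrite -ltnS ltn_ord.
  by rewrite /Theta floorBnat floor_y (subzn k_le) /= big_ord_lez.
rewrite (sum_prefix_sums_mul (fun i => q i%:Z) (fun k => g k%:Z)).
apply: eq_bigr => l _; apply: eq_bigr => k _.
by rewrite subzn // -ltnS ltn_ord.
Qed.

Lemma Theta_conv_floor_lt0 (R : realType) (q g : int -> R) (y : R) :
  Num.floor y < 0 -> Theta_conv q g y = 0.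
Proof. exact: big_ord_lez_lt0. Qed.

Section FinitePartition.
Context (d : measure_display) (T : measurableType d) (R : realType)
        (P : probability T R).

Lemma measure_squeeze_null (A B N : set T) :
  measurable A -> measurable B -> measurable N -> B `<=` A -> A `<=` B `|` N ->
  P N = 0%E -> P A = P B.
Proof.
move=> mA mB mN BA ABN PN; apply/eqP; rewrite eq_le; apply/andP; split.
  by rewrite -(measureU0 mB mN PN) le_measure ?inE //; exact: measurableU.
by rewrite le_measure ?inE.
Qed.

Lemma fine_measure_partition (A N : set T) (G : nat -> set T) (n : nat) :
  measurable A -> measurable N -> (forall i, measurable (G i)) -> P N = 0%E ->
  (forall i j t, G i t -> G j t -> i = j) ->
  (forall i, (i < n)%N -> G i `<=` A) ->
  (forall t, A t -> N t \/ exists2 i, (i < n)%N & G i t) ->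
  fine (P A) = \sum_(i < n) fine (P (G i)).
Proof.
move=> mA mN mG PN G_disj GA AGN.
rewrite (@measure_squeeze_null A (\big[setU/set0]_(i < n) G i) N) //; first last.
- move=> t At; case: (AGN t At) => [Nt|[i i_lt Gt]]; first by right.
  by left; rewrite -bigcup_mkord; exists i.
- by rewrite -bigcup_mkord => t [i i_lt Gt]; exact: (GA i i_lt).
- by apply: bigsetU_measurable => i _.
rewrite (measure_bigsetU_ord P xpredT (F := fun i => G i)) //.
  by rewrite -sum_fine // => i _; exact: fin_num_measure.
by move=> i j _ _ [t [Gi Gj]]; apply: val_inj; exact: (G_disj _ _ t).
Qed.

End FinitePartition.

Lemma measurable_range_seq (R : realType) (xi : nat -> R) : measurable (range xi).
Proof. by apply: countable_measurable; [exact: measurable_set1 | exact: card_image_le]. Qed.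

Lemma incr_seq_le (R : realType) (xi : nat -> R) :
  (forall l, xi l < xi l.+1) -> forall i j, (xi i <= xi j) = (i <= j)%N.
Proof. by move=> xi_incr; apply: le_mono; apply: homo_ltn xi_incr => ? ? ?; apply: lt_trans. Qed.

Section Grid.
Context (d : measure_display) (T : measurableType d) (R : realType)
        (P : probability T R) (X eps : {RV P >-> R}) (xi : nat -> R).
Hypothesis xi_incr : forall l, xi l < xi l.+1.
Hypothesis X_grid : P (X @^-1` range xi) = 1%E.

Let xi_inj i j : xi i = xi j -> i = j.
Proof. by move=> eq_xi; apply/eqP; rewrite eqn_leq -!(incr_seq_le xi_incr) eq_xi lexx. Qed.

Let X_off_grid_null : P (~` (X @^-1` range xi)) = 0%E.
Proof.
by rewrite probability_setC ?X_grid ?subee //; apply: measurable_funPTI; exact: measurable_range_seq.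
Qed.

Let measurable_X_off_grid : measurable (~` (X @^-1` range xi)).
Proof. by apply/measurableC/measurable_funPTI; exact: measurable_range_seq. Qed.

Lemma distr_fn_grid (x : R) (N : nat) :
  (forall m, (xi m <= x) = (m < N)%N) ->
  distr_fn P X x = \sum_(m < N) atom_mass P X (xi m).
Proof.
move=> xi_le_x; rewrite /distr_fn /atom_mass.
apply: (fine_measure_partition (G := fun i => X @^-1` [set xi i]) _ measurable_X_off_grid) => //.
- by apply: measurable_funPTI; exact: measurable_itv.
- by move=> i j t /= -> /xi_inj.
- by move=> i i_lt t /= Xt; rewrite in_itv /= Xt xi_le_x.
move=> t /=; rewrite in_itv /= => Xt_le.
case: (pselect (range xi (X t))) => [[m _ Xt]|]; last by left.
by right; exists m => //; rewrite -xi_le_x Xt.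
Qed.

Hypothesis X_eps_indep : indep_RV P X eps.

Lemma atom_mass_add_grid (z0 : R) (n : nat) :
  cdf_left P eps z0 = 0 ->
  atom_mass P (fun t => X t + eps t) (z0 + xi n) =
  \sum_(m < n.+1) atom_mass P X (xi m) * atom_mass P eps (z0 + xi n - xi m).
Proof.
move=> eps_ge_z0; rewrite /atom_mass; set c := z0 + xi n.
have m_eps_lt : measurable (eps @^-1` `]-oo, z0[).
  by apply: measurable_funPTI; exact: measurable_itv.
have eps_lt_null : P (eps @^-1` `]-oo, z0[) = 0%E.
  by rewrite -[LHS]fineK ?fin_num_measure // -/(cdf_left P eps z0) eps_ge_z0.
have m_Y : measurable ((fun t => X t + eps t) @^-1` [set c]).
  have := measurable_realfun.measurable_funD (measurable_funP X) (measurable_funP eps).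
  by move=> /(_ _ measurableT _ (measurable_set1 c)); rewrite setTI.
rewrite (@fine_measure_partition _ _ _ P _ (~` (X @^-1` range xi) `|` eps @^-1` `]-oo, z0[)
   (fun m => X @^-1` [set xi m] `&` eps @^-1` [set c - xi m]) n.+1) //.
- apply: eq_bigr => m _; rewrite X_eps_indep ?fineM ?fin_num_measure //; exact: measurable_set1.
- exact: measurableU.
- by move=> m; apply: measurableI; apply: measurable_funPTI; exact: measurable_set1.
- exact: null_set_setU.
- by move=> i j t /= [-> _] [/xi_inj].
- by move=> i _ t /= [-> ->]; rewrite addrC subrK.
move=> t /= Yt.
case: (pselect (range xi (X t))) => [[m _ Xt]|]; last by left; left.
case: (ltP (eps t) z0) => eps_t; first by left; right; rewrite /= in_itv.
have eps_tE : eps t = c - xi m by rewrite -Yt -Xt; lra.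
right; exists m; last by split.
by rewrite ltnS -(incr_seq_le xi_incr); move: eps_t; rewrite eps_tE /c; lra.
Qed.

End Grid.

Section Deconvolution.
Context (d : measure_display) (T : measurableType d) (R : realType)
        (P : probability T R) (X eps : {RV P >-> R}) (xi : nat -> R) (z0 : R).
Hypothesis X_eps_indep : indep_RV P X eps.
Hypothesis xi_incr : forall l, xi l < xi l.+1.
Hypothesis X_grid : P (X @^-1` range xi) = 1%E.
Hypothesis eps_z0_gt0 : 0 < atom_mass P eps z0.
Hypothesis eps_ge_z0 : cdf_left P eps z0 = 0.

Local Notation pX := (p_X P X xi).
Local Notation p := (pdd_eps P eps xi z0).
Local Notation q := (pdd_Y P (fun t => X t + eps t) eps xi z0).

Lemma pdd_eps_l0 l : p l 0 = 0.
Proof.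
rewrite /pdd_eps; case: ifP => // l_ge0.
by rewrite eqxx lexx l_ge0 subr0 addrK divff ?subrr // gt_eqF.
Qed.

Lemma p_X_renewal (n : nat) :
  pX n%:Z = q n%:Z + \sum_(k < n.+1) p n%:Z k%:Z * pX (n%:Z - k%:Z).
Proof.
have -> : q n%:Z = \sum_(k < n.+1) pX (n%:Z - k%:Z) * ((k == 0 :> nat)%:R - p n%:Z k%:Z).
  rewrite /pdd_Y /= atom_mass_add_grid // mulr_suml.
  rewrite (reindex_inj rev_ord_inj) /=; apply: eq_bigr => k _.
  have k_le : (k <= n)%N by rewrite -ltnS ltn_ord.
  rewrite subSS (subzn k_le) /p_X /pdd_eps /= -mulrA; congr (_ * _).
  rewrite lez_nat k_le (subzn k_le) /= eqz_nat.
  by case: (_ == 0%N) => /=; ring.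
under [in RHS]eq_bigr do rewrite mulrBr.
rewrite big_split /= sumrN big_ord_recl /= subr0 mulr1 big1 ?addr0; last first.
  by move=> i _; rewrite mulr0.
by under eq_bigr do rewrite mulrC; rewrite subrK.
Qed.

Lemma p_X_dbeta l :
  pX l = \sum_(k < (absz l).+1 | k%:Z <= l) q (l - k%:Z) * dbeta p l k%:Z.
Proof.
case: l => [n|n]; last by rewrite big_ord_lez_lt0.
by rewrite big_ord_lez; apply: renewal_solution; [exact: pdd_eps_l0 | exact: p_X_renewal].
Qed.

Section ArithmeticGrid.
Variable s : R.
Hypothesis s_gt0 : 0 < s.
Hypothesis xi_arith : forall l : nat, xi l = xi 0%N + s * l%:R.

Lemma pdd_eps_stationary l z : z <= l -> p l z = p z z.
Proof.
rewrite /pdd_eps; case: z => [b|b] z_le; last by case: ifP => // _; rewrite /= subrr.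
case: l z_le => [a|a] z_le; last by move: z_le; lia.
have b_le : (b <= a)%N by rewrite -lez_nat.
rewrite /= !lez_nat b_le leqnn (subzn b_le) subrr /=; congr (_ - atom_mass _ _ _ / _).
by rewrite (xi_arith a) (xi_arith (a - b)%N) (xi_arith b) natrB //; ring.
Qed.

Lemma distr_fn_Theta_conv x :
  distr_fn P X x = Theta_conv q (sgamma (fun z => p z z)) ((x - xi 0%N) / s).
Proof.
set y := (x - xi 0%N) / s.
have xi_le_x m : (xi m <= x) = (m%:Z <= Num.floor y).
  rewrite floor_ge_int /y ler_pdivlMr // (xi_arith m) pmulrn.
  by apply/idP/idP => h; lra.
case: (ltP (Num.floor y) 0) => [y_lt0|y_ge0].
  rewrite Theta_conv_floor_lt0 // (@distr_fn_grid _ _ _ _ _ _ xi_incr X_grid x 0) ?big_ord0 //.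
  by move=> m; rewrite xi_le_x; apply/negbTE; rewrite -ltNge (lt_le_trans y_lt0).
have [n floor_y] : exists n : nat, Num.floor y = n%:Z.
  by case: (Num.floor y) y_ge0 => [n|n] //; exists n.
rewrite (Theta_convE _ _ floor_y) (@distr_fn_grid _ _ _ _ _ _ xi_incr X_grid x n.+1); last first.
  by move=> m; rewrite xi_le_x floor_y lez_nat.
apply: eq_bigr => l _; have := p_X_dbeta l; rewrite /p_X /= big_ord_lez => ->.
apply: eq_bigr => k _; rewrite (dbeta_sgamma pdd_eps_stationary) // lez_nat.
by rewrite -ltnS ltn_ord.
Qed.

End ArithmeticGrid.
End Deconvolution.

Unset Implicit Arguments.

Theorem corollary2 (d : measure_display) (T : measurableType d) (R : realType)
  (P : probability T R) (X eps : {RV P >-> R}) (xi : nat -> R) (z0 : R) :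
  indep_RV P X eps ->
  (forall l, xi l < xi l.+1) ->
  P (X @^-1` range xi) = 1%E ->
  0 < atom_mass P X (xi 0%N) ->
  purely_discrete P eps ->
  0 < atom_mass P eps z0 ->
  cdf_left P eps z0 = 0 ->
  let Y := fun t => X t + eps t in
  (forall l : int,
     p_X P X xi l =
     \sum_(k < (absz l).+1 | (k%:Z <= l)%R)
        pdd_Y P Y eps xi z0 (l - k%:Z) * dbeta (pdd_eps P eps xi z0) l k%:Z)
  /\
  (forall s : R, 0 < s -> (forall l : nat, xi l = xi 0%N + s * l%:R) ->
     forall x : R,
       distr_fn P X x =
       Theta_conv (pdd_Y P Y eps xi z0)
                  (sgamma (fun z => pdd_eps P eps xi z0 z z)) ((x - xi 0%N) / s)).
Proof.
move=> X_eps_indep xi_incr X_grid _ _ eps_z0_gt0 eps_ge_z0 Y; split.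
  exact: p_X_dbeta.
exact: distr_fn_Theta_conv.
Qed.
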